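(* Let $n\in\mathbb N$. Then there exists $k_0\in\mathbb N$ such that for all $k,j\in\mathbb N$ with $j\ge k\ge k_0$, $$p^{(j)}_n\le p^{(k)}_n\,\log^{(j-k+1)\log(j-k+1)}p^{(k)}_n.$$
   Context: Let $p_n$ denote the $n$-th prime number. Define $p^{(0)}_n=n$ and recursively $p^{(k+1)}_n=p_{p^{(k)}_n}$ for $k\in\mathbb N_0$. $\log$ is the natural logarithm and $\log^{t}y=(\log y)^t$. *)

From Stdlib Require Import Reals.
From mathcomp Require Import ssreflect ssrfun ssrbool eqtype ssrnat prime.

Set Implicit Arguments.
Unset Strict Implicit.

Lemma ex_prime_above (m : nat) : exists p, (m < p) && prime p.
Proof. case: (prime_above m) => p H1 H2; exists p; by rewrite H1 H2. Qed.

Definition next_prime (m : nat) : nat := ex_minn (ex_prime_above m).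

(* p_n, the n-th prime, 1-indexed: p_1 = 2, p_2 = 3, ...  (p_0 = 1 is junk) *)
Definition nth_prime (n : nat) : nat := iter n next_prime 1.

Definition iter_prime (k n : nat) : nat := iter k nth_prime n.

From Stdlib Require Import Reals Lra ZArith.
From mathcomp Require Import ssreflect ssrfun ssrbool eqtype ssrnat prime bigop binomial div.
From mathcomp Require Import zify.

(* Chebyshev's bounds 2^t <= C(2t, t) <= (2t)^pi(2t) give p_m <= 9 m ln m once
   ln m >= 16.  Fix k, put X = p^(k)_n, L = ln X and E_d = (d+1) ln (d+1).  By
   induction on d, p^(k+d)_n <= X L^E_d: the bound applied to y = p^(k+d)_n gives
   p^(k+d+1)_n <= 9 y ln y <= 9 X L^E_d (L + E_d ln L), and since
   E_(d+1) - E_d >= ln (d+2) + 1/2, the factor 9 (L + E_d ln L) is at most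
   L^(E_(d+1) - E_d) as soon as ln L >= 100.  As p^(k)_n >= k, this holds for
   every k beyond an explicit k0. *)

Set Implicit Arguments.
Unset Strict Implicit.

Lemma next_primeP m : [/\ m < next_prime m, prime (next_prime m) &
  forall q, m < q < next_prime m -> ~~ prime q].
Proof.
rewrite /next_prime; case: ex_minnP => p /andP[lt_mp pr_p] minp.
split=> // q /andP[lt_mq lt_qp]; apply/negP => pr_q.
by have := minp q; rewrite lt_mq pr_q leqNgt lt_qp => /(_ isT).
Qed.

Definition prime_pi (x : nat) : nat := \sum_(0 <= p < x.+1) prime p.

Lemma prime_piS x : prime_pi x.+1 = prime_pi x + prime x.+1.
Proof. by rewrite /prime_pi big_nat_recr. Qed.

Lemma leq_prime_pi x y : x <= y -> prime_pi x <= prime_pi y.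
Proof.
move=> le_xy; rewrite /prime_pi (@big_cat_nat _ _ _ x.+1 0 y.+1) //=.
exact: leq_addr.
Qed.

Lemma prime_pi_gap x y : x <= y < next_prime x -> prime_pi y = prime_pi x.
Proof.
case: (next_primeP x) => _ _ noprime.
elim: y => [|y IHy]; first by rewrite leqn0 => /andP[/eqP->].
rewrite leq_eqVlt => /andP[/orP[/eqP-> //|lt_xy] lt_y].
rewrite prime_piS IHy; last by rewrite -ltnS lt_xy (ltnW lt_y).
by rewrite (negbTE (noprime y.+1 _)) ?addn0 // lt_xy.
Qed.

Lemma prime_pi_next_prime x : prime_pi (next_prime x) = (prime_pi x).+1.
Proof.
case: (next_primeP x); case def_q: (next_prime x) => [//|q] le_xq pr_q _.
by rewrite prime_piS pr_q (@prime_pi_gap x) ?addn1 // -ltnS le_xq def_q /=.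
Qed.

Lemma prime_pi_nth_prime m : prime_pi (nth_prime m) = m.
Proof.
elim: m => [|m IHm]; first by rewrite /prime_pi /= big_nat_recr //= big_nat1.
by rewrite [nth_prime _]/= prime_pi_next_prime IHm.
Qed.

Lemma leq_prime_pi_next_prime x y : x < next_prime y -> prime_pi x <= prime_pi y.
Proof.
move=> lt_x; case: (leqP y x) => [le_yx | /ltnW]; last exact: leq_prime_pi.
by rewrite (@prime_pi_gap y) ?le_yx.
Qed.

Lemma nth_prime_leq m x : 0 < m -> m <= prime_pi x -> nth_prime m <= x.
Proof.
case: m => // m _ le_mx; rewrite leqNgt; apply/negP => /leq_prime_pi_next_prime.
by rewrite prime_pi_nth_prime leqNgt le_mx.
Qed.

Lemma ltn_nth_prime m : m < nth_prime m.
Proof.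
elim: m => // m IHm; case: (next_primeP (nth_prime m)) => lt_next _ _.
exact: leq_ltn_trans IHm lt_next.
Qed.

Lemma leq_iter_prime k n : k <= iter_prime k n.
Proof. by elim: k => // k IHk; apply: leq_ltn_trans IHk (ltn_nth_prime _). Qed.

Lemma leq_iter_prime_add k d n : iter_prime k n <= iter_prime (k + d) n.
Proof.
elim: d => [|d IHd]; first by rewrite addn0.
by rewrite addnS; apply: leq_trans IHd (ltnW (ltn_nth_prime _)).
Qed.

Lemma expn2_leq_central_bin t : 2 ^ t <= 'C(2 * t, t).
Proof.
elim: t => // t IHt.
have bin_succ : 'C(2 * t.+1, t.+1) = 2 * 'C((2 * t).+1, t).
  apply/eqP; rewrite -(eqn_pmul2l (ltn0Sn t)) -mul_bin_diag.
  by rewrite (_ : (2 * t.+1).-1 = (2 * t).+1); [apply/eqP; lia | lia].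
rewrite bin_succ expnS leq_mul2l /=; apply: leq_trans IHt _.
by case: t {bin_succ} => // t; rewrite binS leq_addr.
Qed.

Lemma leq_divn_double t q : 0 < q -> (2 * t) %/ q <= 2 * (t %/ q) + (q <= 2 * t).
Proof.
move=> q_gt0; case: (leqP q (2 * t)) => [le_q|/divn_small->//].
have -> : 2 * t = 2 * (t %/ q) * q + 2 * (t %% q) by rewrite {1}(divn_eq t q); lia.
rewrite divnMDl // leq_add2l -ltnS ltn_divLR //.
by have := ltn_pmod t q_gt0; lia.
Qed.

Lemma sum_expn_leq_trunc_log p N : 1 < p -> 0 < N ->
  \sum_(1 <= k < N.+1) (p ^ k <= N) <= trunc_log p N.
Proof.
move=> p_gt1 N_gt0; set T := trunc_log p N.
have le_TN : T <= N by apply/ltnW/(leq_trans (ltn_expl T p_gt1)); exact: trunc_logP.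
have tail0 : \sum_(T.+1 <= k < N.+1) (p ^ k <= N) = 0.
  rewrite big_nat_cond big1 // => k /andP[/andP[lt_Tk _] _]; apply/eqP.
  rewrite eqb0 -ltnNge.
  exact: leq_trans (trunc_log_ltn N p_gt1) (leq_pexp2l (ltnW p_gt1) lt_Tk).
rewrite (@big_cat_nat _ _ _ T.+1 1 N.+1) //= tail0 addn0.
apply: (@leq_trans (\sum_(1 <= k < T.+1) 1)); first by apply: leq_sum => k _; exact: leq_b1.
by rewrite sum_nat_const_nat subn1 muln1.
Qed.

Lemma sum_divn_expn_widen p t M : 1 < p -> t <= M ->
  \sum_(1 <= k < t.+1) t %/ p ^ k = \sum_(1 <= k < M.+1) t %/ p ^ k.
Proof.
move=> p_gt1 le_tM; rewrite (@big_cat_nat _ _ _ t.+1 1 M.+1) //=.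
rewrite [X in _ + X]big_nat_cond [X in _ + X]big1 ?addn0 //.
move=> k /andP[/andP[lt_tk _] _]; apply: divn_small.
exact: leq_trans (ltn_expl t p_gt1) (leq_pexp2l (ltnW p_gt1) (ltnW lt_tk)).
Qed.

(* Legendre: the k-th term of logn p 'C(2t, t) is 2t %/ p^k - 2 (t %/ p^k), which is
   at most 1, and 0 once p^k > 2t. *)
Lemma logn_central_bin_leq p t : prime p -> 0 < t ->
  logn p 'C(2 * t, t) <= trunc_log p (2 * t).
Proof.
move=> pr_p t_gt0; have p_gt1 := prime_gt1 pr_p.
have le_t2t : t <= 2 * t by rewrite leq_pmull.
have := congr1 (logn p) (bin_fact le_t2t); rewrite (_ : 2 * t - t = t); last lia.
rewrite !lognM ?muln_gt0 ?fact_gt0 ?bin_gt0 // !logn_fact //.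
rewrite (sum_divn_expn_widen p_gt1 le_t2t) => legendre.
have := @sum_expn_leq_trunc_log p (2 * t) p_gt1 (leq_trans t_gt0 le_t2t).
have : \sum_(1 <= k < (2 * t).+1) (2 * t) %/ p ^ k <=
    2 * \sum_(1 <= k < (2 * t).+1) t %/ p ^ k
    + \sum_(1 <= k < (2 * t).+1) (p ^ k <= 2 * t).
  rewrite big_distrr -big_split; apply: leq_sum => k _.
  by apply: leq_divn_double; rewrite expn_gt0 ltnW.
lia.
Qed.

Lemma prime_pow_logn_central_bin p t : prime p -> 0 < t ->
  p ^ logn p 'C(2 * t, t) <= 2 * t.
Proof.
move=> pr_p t_gt0; have p_gt1 := prime_gt1 pr_p.
apply: leq_trans (trunc_logP p_gt1 _); last by rewrite muln_gt0.
exact: leq_pexp2l (ltnW p_gt1) (logn_central_bin_leq pr_p t_gt0).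
Qed.

Lemma leq_pow_prime_pi n N : 0 < n ->
  (forall p, prime p -> p ^ logn p n <= N) -> n <= N ^ prime_pi N.
Proof.
move=> n_gt0 pow_logn_le.
have pow_logn_large p : N < p -> p ^ logn p n = 1.
  move=> lt_Np; case: (boolP (prime p)) => [pr_p | /negbTE np]; last by rewrite lognE np.
  suff: p ^ logn p n < p ^ 1 by rewrite ltn_exp2l ?prime_gt1 // ltnS leqn0 => /eqP->.
  by rewrite expn1 (leq_ltn_trans (pow_logn_le p pr_p)).
rewrite -{1}(partnT n_gt0) (widen_partn _ (leq_addl N n)).
rewrite (@big_cat_nat _ _ _ N.+1 0 (N + n).+1) //= ?ltnS ?leq_addr //.
rewrite [X in _ * X]big_nat_cond [X in _ * X]big1 ?muln1; last first.
  by move=> p /andP[/andP[lt_Np _] _]; apply: pow_logn_large.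
rewrite /prime_pi expn_sum big_mkcond /=; apply: leq_prod => p _.
case: (boolP (prime p)) => [pr_p | /negbTE np]; first by rewrite expn1 pow_logn_le.
by rewrite lognE np.
Qed.

Lemma nth_prime_leq_double m t : 0 < m -> 0 < t ->
  (2 * t) ^ m <= 2 ^ t -> nth_prime m <= 2 * t.
Proof.
move=> m_gt0 t_gt0 le_pow; apply: nth_prime_leq => //.
have t2_gt1 : 1 < 2 * t by lia.
rewrite -(leq_exp2l _ _ t2_gt1); apply: leq_trans le_pow _.
apply: leq_trans (expn2_leq_central_bin t) _.
apply: leq_pow_prime_pi; first by rewrite bin_gt0 leq_pmull.
by move=> p pr_p; apply: prime_pow_logn_central_bin.
Qed.

Local Open Scope R_scope.

Lemma ln_le x y : 0 < x -> x <= y -> ln x <= ln y.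
Proof. by move=> x_gt0 [lt_xy|->]; [apply/Rlt_le/ln_increasing | apply: Rle_refl]. Qed.

Lemma exp_le x y : x <= y -> exp x <= exp y.
Proof. by move=> [lt_xy|->]; [apply/Rlt_le/exp_increasing | apply: Rle_refl]. Qed.

Lemma ln_le_sub1 x : 0 < x -> ln x <= x - 1.
Proof. by move=> x_gt0; have := exp_ineq1_le (ln x); rewrite exp_ln //; lra. Qed.

Lemma ln2_ge : 5/8 <= ln 2.
Proof.
have ln3_ge1 : 1 <= ln 3.
  by rewrite -(ln_exp 1); apply: ln_le; [exact: exp_pos | exact: exp_le_3].
have ln34_le := @ln_le_sub1 (3/4) ltac:(lra).
have ln3E : ln 3 = ln (3/4) + ln 2 + ln 2.
  by rewrite -!ln_mult; try lra; f_equal; lra.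
lra.
Qed.

Lemma INR_ceil x : 0 <= x -> exists t : nat, x <= INR t <= x + 1.
Proof.
move=> x_ge0; case: (archimed x) => up_gt up_le.
have up_ge0 : (0 <= up x)%Z by apply: le_IZR; lra.
by exists (Z.to_nat (up x)); rewrite INR_IZR_INZ Z2Nat.id //; lra.
Qed.

Lemma expn_leq_of_ln (a b m t : nat) : (0 < a)%N -> (0 < b)%N ->
  INR m * ln (INR a) <= INR t * ln (INR b) -> (a ^ m <= b ^ t)%N.
Proof.
move=> a_gt0 b_gt0 le_ln; apply/leP/INR_le.
have INR_expn (c e : nat) : INR (c ^ e)%N = INR c ^ e.
  by rewrite -pow_INR; congr INR; elim: e => // e IHe; rewrite expnS IHe.
by rewrite !INR_expn -!Rpower_pow; [exact: exp_le | exact/lt_0_INR/ltP..].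
Qed.

Lemma nth_prime_le_mul_ln m : exp 16 <= INR m ->
  INR (nth_prime m) <= 9 * INR m * ln (INR m).
Proof.
set x := INR m => x_ge.
have x_ge17 : 17 <= x by have := exp_ineq1_le 16; lra.
have L_ge : 16 <= ln x by rewrite -(ln_exp 16); apply: ln_le => //; exact: exp_pos.
set L := ln x in L_ge *.
have [t [t_ge t_le]] := @INR_ceil (4 * x * L) ltac:(nra).
have t_gt0 : (0 < t)%N by apply/ltP/INR_lt; rewrite /=; nra.
have INR_2t : INR (2 * t) = 2 * INR t by rewrite mulnE mult_INR.
have le_pow : ((2 * t) ^ m <= 2 ^ t)%N.
  apply: expn_leq_of_ln; rewrite ?muln_gt0 // INR_2t -/x.
  have ln_2t : ln (2 * INR t) <= 2 * L + 8.
    have ln10 : ln 10 <= 9 by have := @ln_le_sub1 10 ltac:(lra); lra.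
    have lnL : ln L <= L - 1 by apply: ln_le_sub1; lra.
    have : ln (2 * INR t) <= ln 10 + L + ln L.
      rewrite -!ln_mult; try nra; apply: ln_le; nra.
    lra.
  have : INR t * (5/8) <= INR t * ln 2.
    by apply: Rmult_le_compat_l; [exact: pos_INR | exact: ln2_ge].
  have : x * ln (2 * INR t) <= x * (2 * L + 8) by apply: Rmult_le_compat_l; lra.
  have : 0 <= x * (L - 16) by apply: Rmult_le_pos; lra.
  rewrite (_ : INR 2 = 2); [lra | rewrite /=; lra].
have m_gt0 : (0 < m)%N by apply/ltP/INR_lt; rewrite /= -/x; lra.
have := nth_prime_leq_double m_gt0 t_gt0 le_pow => /leP/le_INR.
rewrite INR_2t; nra.
Qed.

Definition xlnx (x : R) : R := x * ln x.

Lemma xlnx_increment_ge x : 1 <= x -> ln (x + 1) + 1/2 <= xlnx (x + 1) - xlnx x.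
Proof.
move=> x_ge1; set q := x / (x + 1).
have q_gt0 : 0 < q by apply: Rdiv_lt_0_compat; lra.
have qE : q * (x + 1) = x by rewrite /q; field; lra.
have lnxE : ln x = ln q + ln (x + 1) by rewrite -ln_mult; [congr ln | | ]; lra.
have : x * ln q <= x * (q - 1) by apply: Rmult_le_compat_l; [lra | exact: ln_le_sub1].
rewrite /xlnx lnxE; nra.
Qed.

Lemma Rpower_xlnx_increment_ge x L : 1 <= x -> exp 100 <= L ->
  9 * (L + xlnx x * ln L) <= Rpower L (xlnx (x + 1) - xlnx x).
Proof.
move=> x_ge1 L_ge.
have L_gt0 : 0 < L by have := exp_pos 100; lra.
have l_ge : 100 <= ln L by rewrite -(ln_exp 100); apply: ln_le => //; exact: exp_pos.
have l_le : ln L <= L by have := ln_le_sub1 L_gt0; lra.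
have u_ge : 5/8 <= ln (x + 1) by apply: (Rle_trans _ _ _ ln2_ge (ln_le _ _)); lra.
have lnx_ge0 : 0 <= ln x by rewrite -ln_1; apply: ln_le; lra.
have lnx_le : ln x <= x - 1 by apply: ln_le_sub1; lra.
set l := ln L in l_ge l_le *; set u := ln (x + 1) in u_ge *.
have le_sq : 9 * (L + xlnx x * l) <= 9 * ((x + 1) * (x + 1)) * L.
  have : xlnx x * l <= x * (x - 1) * L.
    by apply: Rmult_le_compat; rewrite /xlnx; try apply: Rmult_le_compat_l; nra.
  nra.
have sqE : 9 * ((x + 1) * (x + 1)) * L = exp (ln 9 + (u + u) + l).
  by rewrite !exp_plus /u /l !exp_ln //; lra.
apply: (Rle_trans _ _ _ le_sq); rewrite sqE; apply: exp_le.
have ln9_le : ln 9 <= 8 by have := @ln_le_sub1 9 ltac:(lra); lra.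
have : (u + 1/2) * l <= (xlnx (x + 1) - xlnx x) * l.
  by apply: Rmult_le_compat_r; [lra | exact: xlnx_increment_ge].
have : 0 <= (u - 5/8) * (l - 2) by apply: Rmult_le_pos; lra.
rewrite -/l; lra.
Qed.

Lemma iter_prime_add_le n k d : exp (exp 100) <= INR (iter_prime k n) ->
  INR (iter_prime (k + d) n) <=
  INR (iter_prime k n) * Rpower (ln (INR (iter_prime k n))) (xlnx (INR d.+1)).
Proof.
set X := INR (iter_prime k n) => X_ge.
have X_gt0 : 0 < X by have := exp_pos (exp 100); lra.
have L_ge : exp 100 <= ln X.
  by rewrite -(ln_exp (exp 100)); apply: ln_le => //; exact: exp_pos.
have L_gt0 : 0 < ln X by have := exp_pos 100; lra.
set L := ln X in L_ge L_gt0 *.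
elim: d => [|d IHd].
  by rewrite addn0 /xlnx /= ln_1 Rmult_0_r Rpower_O // Rmult_1_r -/X; apply: Rle_refl.
rewrite addnS [iter_prime _.+1 _]/=.
set y := INR (iter_prime (k + d) n) in IHd *; set E := xlnx (INR d.+1) in IHd *.
have X_le_y : X <= y by apply/le_INR/leP; exact: leq_iter_prime_add.
have y_ge : exp 16 <= y.
  have : exp 16 <= exp (exp 100) by apply: exp_le; have := exp_ineq1_le 100; lra.
  lra.
have y_gt0 : 0 < y by have := exp_pos 16; lra.
have lny_ge0 : 0 <= ln y by rewrite -ln_1; apply: ln_le; have := exp_ineq1_le 16; lra.
have lny_le : ln y <= L + E * ln L.
  apply: (Rle_trans _ _ _ (ln_le y_gt0 IHd)).
  by rewrite ln_mult ?ln_Rpower //; [apply: Rle_refl | exact: exp_pos].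
have x_ge1 : 1 <= INR d.+1 by rewrite S_INR; have := pos_INR d; lra.
have growth := Rpower_xlnx_increment_ge x_ge1 L_ge.
rewrite -S_INR -/E in growth.
apply: (Rle_trans _ _ _ (nth_prime_le_mul_ln y_ge)); rewrite -/y.
apply: (Rle_trans _ (X * Rpower L E * (9 * (L + E * ln L)))); first nra.
rewrite (_ : xlnx (INR d.+2) = E + (xlnx (INR d.+2) - E)); last ring.
rewrite Rpower_plus -(Rmult_assoc X); apply: Rmult_le_compat_l => //; lra.
Qed.

Theorem theorem9 (n : nat) (hn : (1 <= n)%nat) :
  exists k0 : nat, forall k j : nat, (k0 <= k)%nat -> (k <= j)%nat ->
    (INR (iter_prime j n) <=
     INR (iter_prime k n) *
     Rpower (ln (INR (iter_prime k n)))
            (INR (j - k + 1) * ln (INR (j - k + 1))))%R.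
Proof.
have [k0 [k0_ge _]] := INR_ceil (Rlt_le _ _ (exp_pos (exp 100))).
exists k0 => k j le_k0k le_kj.
have X_ge : exp (exp 100) <= INR (iter_prime k n).
  apply: (Rle_trans _ _ _ k0_ge); apply/le_INR/leP.
  exact: leq_trans le_k0k (leq_iter_prime k n).
rewrite addn1 -{1}(subnKC le_kj).
exact: iter_prime_add_le X_ge.
Qed.
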